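(* Let $G=(V,E)$ be a finite, connected, simple graph with at least two vertices and generic weights $(w_x)_{x\in\Sigma}$, $\Sigma=V\cup E$; let $M$ be the ground state and let $S\subset\Sigma$ be such that no element of $S$ belongs to $M$. Consider new weights $w'_y\ge w_y$ for $y\in S$ and $w'_y=w_y$ for $y\notin S$. Then the ground state for the new weights is still $M$, and for every $x\in\Sigma$ the flexibility $F_G(x)$ computed with the new weights is at least the flexibility $F_G(x)$ computed with the old weights.
   Context: A matching of $G$ is a set $M\subset\Sigma$ such that every vertex either belongs to $M$ or is an endpoint of exactly one edge of $M$, but not both. $H(M)=\sum_{z\in M}w_z$; the ground state is the matching minimising $H$. Weights are generic if no nontrivial integer combination of finitely many weights vanishes. For $x\in\Sigma$, $M_{G,x,1}$ (resp. $M_{G,x,0}$) is the minimal-weight matching among those containing $x$ (resp. not containing $x$); $K_{G,x}=H(M_{G,x,0})-H(M_{G,x,1})+w_x$ and the flexibility is $F_G(x)=|K_{G,x}-w_x|$, all relative to the given weights. *)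

From HB Require Import structures.
From mathcomp Require Import all_boot all_order all_algebra.
Set Implicit Arguments. Unset Strict Implicit. Unset Printing Implicit Defensive.
Import Order.TTheory GRing.Theory Num.Theory.
Local Open Scope ring_scope.

(* A simple graph is a symmetric irreflexive relation e on a finType V.
   An edge is a 2-element vertex set {u, v} with e u v. *)
Definition is_edge (V : finType) (e : rel V) (A : {set V}) : bool :=
  [exists u, exists v, e u v && (A == [set u; v])].

Definition edge (V : finType) (e : rel V) := {A : {set V} | is_edge e A}.

Definition Sigma (V : finType) (e : rel V) : finType := (V + edge e)%type.

Definition edeg (V : finType) (e : rel V) (M : {set Sigma e}) (v : V) : nat :=
  #|[set E : edge e | (inr E \in M) && (v \in val E)]|.

Definition is_matching (V : finType) (e : rel V) (M : {set Sigma e}) : bool :=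
  [forall v : V, ((inl v \in M) && (edeg M v == 0%N))
                 || ((inl v \notin M) && (edeg M v == 1%N))].

Definition Hw (R : realFieldType) (V : finType) (e : rel V)
  (w : Sigma e -> R) (M : {set Sigma e}) : R := \sum_(z in M) w z.

Definition generic (R : realFieldType) (V : finType) (e : rel V)
  (w : Sigma e -> R) : Prop :=
  forall c : Sigma e -> int, (exists z, c z != 0) ->
    \sum_(z : Sigma e) (c z)%:~R * w z != 0.

Definition ground_state (R : realFieldType) (V : finType) (e : rel V)
  (w : Sigma e -> R) (M : {set Sigma e}) : Prop :=
  is_matching M /\
  forall M' : {set Sigma e}, is_matching M' -> M' != M -> Hw w M < Hw w M'.

(* minimal value of H among matchings satisfying P (0 if there is none) *)
Definition Hmin (R : realFieldType) (V : finType) (e : rel V)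
  (w : Sigma e -> R) (P : pred {set Sigma e}) : R :=
  if [pick M | is_matching M && P M] is Some M0 then
    \big[Num.min/Hw w M0]_(M | is_matching M && P M) Hw w M
  else 0.

Definition H1 (R : realFieldType) (V : finType) (e : rel V)
  (w : Sigma e -> R) (x : Sigma e) : R := Hmin w (fun M => x \in M).
Definition H0 (R : realFieldType) (V : finType) (e : rel V)
  (w : Sigma e -> R) (x : Sigma e) : R := Hmin w (fun M => x \notin M).

Definition Kx (R : realFieldType) (V : finType) (e : rel V)
  (w : Sigma e -> R) (x : Sigma e) : R := H0 w x - H1 w x + w x.

Definition flex (R : realFieldType) (V : finType) (e : rel V)
  (w : Sigma e -> R) (x : Sigma e) : R := `|Kx w x - w x|.

(* Raising weights off the ground state M leaves H(M) unchanged and raises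
   every other energy, so M stays the ground state.  Since M contains or
   avoids any given x, one of H(M_{G,x,1}), H(M_{G,x,0}) equals H(M) for both
   weight systems, and the flexibility is the gap between H(M) and the other
   constrained minimum, which can only grow. *)
From HB Require Import structures.
From mathcomp Require Import all_boot all_order all_algebra.
Import Order.TTheory GRing.Theory Num.Theory.
Local Open Scope ring_scope.

Section ConstrainedMinimum.
Variables (R : realFieldType) (V : finType) (e : rel V).
Implicit Types (w : Sigma e -> R) (P : pred {set Sigma e}) (M : {set Sigma e}).

Lemma Hmin_le {w P M} : is_matching M -> P M -> Hmin w P <= Hw w M.
Proof.
move=> matM PM; rewrite /Hmin; case: pickP => [M0 _|/(_ M)]; last by rewrite matM PM.
by rewrite (bigD1 M) ?matM ?PM //= ge_min lexx.
Qed.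

Lemma Hmin_ge {w P c M0} : is_matching M0 -> P M0 ->
  (forall M, is_matching M -> P M -> c <= Hw w M) -> c <= Hmin w P.
Proof.
move=> matM0 PM0 lbP; rewrite /Hmin; case: pickP => [M1 /andP[matM1 PM1]|/(_ M0)];
  last by rewrite matM0 PM0.
apply: (big_ind (fun r => c <= r)); first exact: lbP.
  by move=> r s cr cs; rewrite le_min cr cs.
by move=> M /andP[]; apply: lbP.
Qed.

Lemma Hmin_nomatching w P : ~~ [exists M, is_matching M && P M] -> Hmin w P = 0.
Proof.
by move=> /existsPn noP; rewrite /Hmin; case: pickP => // M; rewrite (negbTE (noP M)).
Qed.

Lemma Hw_homo {w w'} M : (forall y, w y <= w' y) -> Hw w M <= Hw w' M.
Proof. by move=> le_ww'; apply: ler_sum => y _; apply: le_ww'. Qed.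

Lemma Hmin_homo {w w'} P : (forall y, w y <= w' y) -> Hmin w P <= Hmin w' P.
Proof.
move=> le_ww'.
have [/existsP[M0 /andP[matM0 PM0]]|noP] := boolP [exists M, is_matching M && P M].
  apply: Hmin_ge matM0 PM0 _ => M matM PM.
  exact: le_trans (Hmin_le matM PM) (Hw_homo M le_ww').
by rewrite !Hmin_nomatching.
Qed.

Lemma ground_state_le {w M M'} : ground_state w M -> is_matching M' ->
  Hw w M <= Hw w M'.
Proof.
by case=> _ minM matM'; have [->|/(minM _ matM')/ltW] := eqVneq M' M.
Qed.

Lemma ground_state_Hmin {w M} P : ground_state w M -> P M -> Hmin w P = Hw w M.
Proof.
move=> gsM PM; apply/le_anti; rewrite Hmin_le ?gsM.1 //=.
by apply: Hmin_ge gsM.1 PM _ => M' matM' _; apply: ground_state_le.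
Qed.

Lemma ground_state_raise {w w' M} : ground_state w M ->
  (forall y, w y <= w' y) -> Hw w' M = Hw w M -> ground_state w' M.
Proof.
move=> [matM minM] le_ww' HwM; split=> // M' matM' neqM.
by rewrite HwM; apply: lt_le_trans (minM _ matM' neqM) (Hw_homo M' le_ww').
Qed.

(* If no matching satisfies P, both minima take the junk value 0. *)
Lemma Hmin_gap_homo {w w' M} P : ground_state w M ->
  (forall y, w y <= w' y) -> Hw w' M = Hw w M ->
  `|Hmin w P - Hw w M| <= `|Hmin w' P - Hw w' M|.
Proof.
move=> gsM le_ww' HwM; rewrite HwM.
have [/existsP[M0 /andP[matM0 PM0]]|noP] := boolP [exists M', is_matching M' && P M'].
  have gapP : Hw w M <= Hmin w P.
    by apply: Hmin_ge matM0 PM0 _ => M' matM' _; apply: ground_state_le.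
  have le_gap := Hmin_homo P le_ww'.
  by rewrite !ger0_norm ?subr_ge0 ?lerD2r // (le_trans gapP).
by rewrite !Hmin_nomatching.
Qed.

Lemma flexE w x : flex w x = `|H0 w x - H1 w x|.
Proof. by rewrite /flex /Kx addrK. Qed.

Lemma flex_homo {w w' M} x : ground_state w M ->
  (forall y, w y <= w' y) -> Hw w' M = Hw w M -> flex w x <= flex w' x.
Proof.
move=> gsM le_ww' HwM; have gsM' := ground_state_raise gsM le_ww' HwM.
rewrite !flexE; have [xM|xNM] := boolP (x \in M).
  rewrite /H1 (ground_state_Hmin _ gsM) ?(ground_state_Hmin _ gsM') // /H0.
  exact: Hmin_gap_homo.
rewrite /H0 (ground_state_Hmin _ gsM) ?(ground_state_Hmin _ gsM') // /H1.
by rewrite distrC [X in _ <= X]distrC; apply: Hmin_gap_homo.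
Qed.

End ConstrainedMinimum.

Theorem lemma2p13 (R : realFieldType) (V : finType) (e : rel V)
  (e_sym : symmetric e) (e_irr : irreflexive e)
  (e_conn : forall u v : V, connect e u v) (two_vertices : (1 < #|V|)%N)
  (w w' : Sigma e -> R) (w_gen : generic w)
  (M S : {set Sigma e}) (hM : ground_state w M) (hSM : [disjoint S & M])
  (hS : forall y, y \in S -> w y <= w' y)
  (hnS : forall y, y \notin S -> w' y = w y) :
  ground_state w' M /\ (forall x : Sigma e, flex w x <= flex w' x).
Proof.
have le_ww' y : w y <= w' y by have [/hS|/hnS ->] := boolP (y \in S).
have HwM : Hw w' M = Hw w M.
  by apply: eq_bigr => z zM; apply: hnS; rewrite (disjointFl hSM zM).
split; first exact: ground_state_raise le_ww' HwM.
by move=> x; apply: flex_homo hM le_ww' HwM.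
Qed.
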